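(* (i) Let $H=(V,E,(a,b))$ be an undirected multigraph with output pair in which any two distinct nodes are joined by at most one edge, and let $v\in V\setminus\{a,b\}$ be incident to at least one edge. Then there exists a finite sequence of operations from the node-based bank $\mathcal F_n$ that deletes $v$ and deletes no other node if and only if $v$ has at most $1$ neighbor. (ii) Let $H=(V,E,(a,b))$ be any directed multigraph with output pair and let $v\in V\setminus\{a,b\}$ be incident to at least one edge. Then there exists a finite sequence of operations from the edge-based bank $\mathcal F_e$ that deletes $v$ and deletes no other node if and only if $v$ has at most $2$ neighbors.
   Context: A (directed, resp. undirected) multigraph with output pair is $H=(V,E,(a,b))$ with finite node set $V$, $E$ a finite multiset of ordered (resp. unordered) pairs of nodes (loops and parallel edges allowed), and $a,b\in V$ a distinguished not necessarily distinct pair (the red edge, not in $E$). Two distinct nodes are neighbors if some edge of $E$ joins them. Node-based bank $\mathcal F_n$ (acting on undirected multigraphs): (N1) if $v\notin\{a,b\}$ and the only edge incident to $v$ is a single self-loop, delete $v$ and that loop; (N2) if a node has at least two self-loops, remove one of them; (N3) if $v\notin\{a,b\}$ has no self-loop and exactly one incident edge $\{v,u\}$, $u\ne v$, delete $v$ and that edge and add a self-loop at $u$; (N4) if $v\notin\{a,b\}$ has exactly one self-loop and exactly one other incident edge $\{v,u\}$, $u\neq v$, delete $v$ and its edges and add a self-loop at $u$. Edge-based bank $\mathcal F_e$ (acting on directed multigraphs): (E1) as N1; (E2) as N2; (E3) if $v\notin\{a,b\}$ has no self-loop and exactly one incident edge, which is $(v,u)$ with $u\ne v$, delete $v$ and that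 edge and add a self-loop $(u,u)$; (E4) replace a self-loop $(v,v)$ by an edge $(v,u)$ for some node $u\neq v$; (E5) if there are two parallel edges $(u,v),(u,v)$ with $u\ne v$, remove one of them; (E6) replace an edge $(u,v)$, $u\ne v$, by $(v,u)$; (E7) if $w\notin\{a,b\}$ has no self-loop and exactly two incident edges $(u,w)$ and $(w,v)$ with $u,v,w$ pairwise distinct, delete $w$ and these edges and add the edge $(u,v)$. *)

From mathcomp Require Import all_boot.
Set Implicit Arguments. Unset Strict Implicit. Unset Printing Implicit Defensive.

(* Node names range over a finite type T;
   the node set is a finite set V : {set T}; the edge multiset E is a list
   of pairs of nodes, considered up to permutation (perm_eq).  For the
   undirected setting an edge (x,y) is read as the unordered pair {x,y}.
   The output pair (a,b) is passed separately (it never changes). *)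
Record mgraph (T : finType) := MG { nodes : {set T}; edges : seq (T * T) }.

Section Defs.
Variable T : finType.

Definition joins (x y : T) (e : T * T) : bool := (e == (x, y)) || (e == (y, x)).

Definition incident (v : T) (e : T * T) : bool := (e.1 == v) || (e.2 == v).

Definition neighbors (E : seq (T * T)) (v : T) : {set T} :=
  [set u | (u != v) && has (joins v u) E].

Definition wf_graph (a b : T) (H : mgraph T) : Prop :=
  [/\ a \in nodes H, b \in nodes H &
      all (fun e => (e.1 \in nodes H) && (e.2 \in nodes H)) (edges H)].

Definition no_parallel (E : seq (T * T)) : Prop :=
  forall x y : T, x != y -> count (joins x y) E <= 1.

Inductive step_n (a b : T) : mgraph T -> mgraph T -> Prop :=
| N1 (V : {set T}) (E E' : seq (T * T)) v : v \in V -> v \notin [:: a; b] ->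
    perm_eq E ((v, v) :: E') -> ~~ has (incident v) E' ->
    step_n a b (MG V E) (MG (V :\ v) E')
| N2 (V : {set T}) (E E' : seq (T * T)) x : perm_eq E ((x, x) :: (x, x) :: E') ->
    step_n a b (MG V E) (MG V ((x, x) :: E'))
| N3 (V : {set T}) (E E' : seq (T * T)) v u e : v \in V -> v \notin [:: a; b] -> u != v -> joins v u e ->
    perm_eq E (e :: E') -> ~~ has (incident v) E' ->
    step_n a b (MG V E) (MG (V :\ v) ((u, u) :: E'))
| N4 (V : {set T}) (E E' : seq (T * T)) v u e : v \in V -> v \notin [:: a; b] -> u != v -> joins v u e ->
    perm_eq E ((v, v) :: e :: E') -> ~~ has (incident v) E' ->
    step_n a b (MG V E) (MG (V :\ v) ((u, u) :: E')).

Inductive step_e (a b : T) : mgraph T -> mgraph T -> Prop :=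
| E1 (V : {set T}) (E E' : seq (T * T)) v : v \in V -> v \notin [:: a; b] ->
    perm_eq E ((v, v) :: E') -> ~~ has (incident v) E' ->
    step_e a b (MG V E) (MG (V :\ v) E')
| E2 (V : {set T}) (E E' : seq (T * T)) x : perm_eq E ((x, x) :: (x, x) :: E') ->
    step_e a b (MG V E) (MG V ((x, x) :: E'))
| E3 (V : {set T}) (E E' : seq (T * T)) v u : v \in V -> v \notin [:: a; b] -> u != v ->
    perm_eq E ((v, u) :: E') -> ~~ has (incident v) E' ->
    step_e a b (MG V E) (MG (V :\ v) ((u, u) :: E'))
| E4 (V : {set T}) (E E' : seq (T * T)) v u : u \in V -> u != v ->
    perm_eq E ((v, v) :: E') ->
    step_e a b (MG V E) (MG V ((v, u) :: E'))
| E5 (V : {set T}) (E E' : seq (T * T)) u v : u != v ->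
    perm_eq E ((u, v) :: (u, v) :: E') ->
    step_e a b (MG V E) (MG V ((u, v) :: E'))
| E6 (V : {set T}) (E E' : seq (T * T)) u v : u != v ->
    perm_eq E ((u, v) :: E') ->
    step_e a b (MG V E) (MG V ((v, u) :: E'))
| E7 (V : {set T}) (E E' : seq (T * T)) u w v : w \in V -> w \notin [:: a; b] ->
    u != v -> u != w -> v != w ->
    perm_eq E ((u, w) :: (w, v) :: E') -> ~~ has (incident w) E' ->
    step_e a b (MG V E) (MG (V :\ w) ((u, v) :: E')).

Inductive star (R : mgraph T -> mgraph T -> Prop) : mgraph T -> mgraph T -> Prop :=
| star_refl G : star R G G
| star_step G1 G2 G3 : R G1 G2 -> star R G2 G3 -> star R G1 G3.

Definition deletes_exactly (R : mgraph T -> mgraph T -> Prop) (H : mgraph T) (v : T) : Prop :=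
  exists H', star R H H' /\ nodes H' = nodes H :\ v.

End Defs.

From mathcomp Require Import all_boot.
Set Implicit Arguments. Unset Strict Implicit. Unset Printing Implicit Defensive.

(* No operation of either bank separates two nodes that it keeps, and an
   operation can delete a node only when that node has at most one (F_n) or at
   most two (F_e) neighbours.  When only v is deleted all its neighbours
   survive, so v keeps all of them until it is deleted: hence the bound.
   Conversely, in F_n a node with a single neighbour and no parallel edges is
   removed by collapsing its loops (N2) and applying N1, N3 or N4.  In F_e the
   loops at v are first turned into edges towards a neighbour (E4), the
   parallel edges at v are reoriented and merged (E6, E5), and v is removed by
   E1, E3 or E7. *)

Section Neighbors.
Variable T : finType.
Implicit Types (x y u v w : T) (e : T * T) (E l : seq (T * T)).

Lemma joins_sym x y e : joins x y e = joins y x e.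
Proof. by rewrite /joins orbC. Qed.

Lemma joins_swap x y p q : joins x y (p, q) = joins x y (q, p).
Proof. by rewrite /joins !xpair_eqE andbC orbC andbC. Qed.

Lemma joins_pair x y : joins x y (x, y).
Proof. by rewrite /joins eqxx. Qed.

Lemma joins_incident x y e : joins x y e -> incident x e.
Proof.
case: e => p q; rewrite /joins /incident !xpair_eqE /=.
by case/orP=> /andP[/eqP-> /eqP->]; rewrite eqxx ?orbT.
Qed.

Lemma joins_loop x y z : joins x y (z, z) -> x = y.
Proof. by rewrite /joins !xpair_eqE => /orP[]/andP[/eqP<- /eqP<-]. Qed.

Lemma joins_inj v w1 w2 e : w1 != v -> joins v w1 e -> joins v w2 e -> w1 = w2.
Proof.
move=> w1v; case: e => p q; rewrite /joins !xpair_eqE.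
by case/orP=> /andP[/eqP ? /eqP ?]; subst; case/orP=> /andP[/eqP ? /eqP ?]; subst;
  rewrite ?eqxx in w1v *.
Qed.

Lemma incident_endpoint v w d e : joins v w e -> incident d e -> d = v \/ d = w.
Proof.
case: e => p q; rewrite /joins /incident !xpair_eqE /=.
by case/orP=> /andP[/eqP-> /eqP->] /orP[]/eqP->; auto.
Qed.

Lemma joins_endpoint (V : {set T}) v u e :
  joins v u e -> (e.1 \in V) && (e.2 \in V) -> u \in V.
Proof.
case: e => p q; rewrite /joins !xpair_eqE /=.
by case/orP=> /andP[/eqP-> /eqP->] /andP[].
Qed.

Lemma incident_joins v e : incident v e -> e != (v, v) -> exists2 u, u != v & joins v u e.
Proof.
case: e => p q /orP[]/eqP <- ne.
  by exists q; [apply: contra ne => /eqP-> | rewrite joins_pair].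
by exists p; [apply: contra ne => /eqP-> | rewrite joins_sym joins_pair].
Qed.

Lemma neighborsP E v u : reflect (u != v /\ has (joins v u) E) (u \in neighbors E v).
Proof. by rewrite inE; apply: andP. Qed.

Lemma neighbors_perm E1 E2 v : perm_eq E1 E2 -> neighbors E1 v = neighbors E2 v.
Proof. by move=> p; apply/setP => u; rewrite !inE (perm_has _ p). Qed.

Lemma neighbors_cat E1 E2 v : neighbors (E1 ++ E2) v = neighbors E1 v :|: neighbors E2 v.
Proof. by apply/setP => u; rewrite !inE has_cat andb_orr. Qed.

Lemma neighbors_loop x v : neighbors [:: (x, x)] v = set0.
Proof.
apply/setP => u; rewrite in_set0; apply/negP => /neighborsP[uv] /=.
by rewrite orbF => /joins_loop vu; rewrite vu eqxx in uv.
Qed.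

Lemma neighbors_swap p q v : neighbors [:: (p, q)] v = neighbors [:: (q, p)] v.
Proof. by apply/setP => u; rewrite !inE /= !orbF joins_swap. Qed.

Lemma neighbors_joins v u e : joins v u e -> neighbors [:: e] v \subset [set u].
Proof.
move=> j; apply/subsetP => w /neighborsP[wv] /=; rewrite orbF inE => jw.
by rewrite (joins_inj wv jw j).
Qed.

Lemma neighbors_free E v : ~~ has (incident v) E -> neighbors E v = set0.
Proof.
move=> free; apply/setP => u; rewrite in_set0; apply/negP => /neighborsP[_ /hasP[e eE j]].
by case/hasP: free; exists e => //; apply: joins_incident j.
Qed.

Lemma neighbors_isolate E l E' v :
  perm_eq E (l ++ E') -> ~~ has (incident v) E' -> neighbors E v = neighbors l v.
Proof.
by move=> p free; rewrite (neighbors_perm _ p) neighbors_cat (neighbors_free free) setU0.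
Qed.

Lemma neighbors_replace E l l' E' v : perm_eq E (l ++ E') ->
  neighbors l v \subset neighbors l' v -> neighbors E v \subset neighbors (l' ++ E') v.
Proof. by move=> p sub; rewrite (neighbors_perm _ p) !neighbors_cat setSU. Qed.

Lemma neighbors_drop E l l' E' d v w : perm_eq E (l ++ E') -> all (incident d) l ->
  v != d -> w != d -> w \in neighbors E v -> w \in neighbors (l' ++ E') v.
Proof.
move=> p ld vd wd; rewrite (neighbors_perm _ p) !neighbors_cat !inE => /orP[|->]; last first.
  by rewrite orbT.
case/andP=> _ /hasP[e el j].
by case: (incident_endpoint j (allP ld e el)) => dE; rewrite dE eqxx in vd wd.
Qed.

Lemma neighbors_sub_nodes (V : {set T}) E v :
  all (fun e => (e.1 \in V) && (e.2 \in V)) E -> neighbors E v \subset V :\ v.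
Proof.
move=> endsV; apply/subsetP => u /neighborsP[uv /hasP[e eE j]].
by rewrite in_setD1 uv (joins_endpoint j (allP endsV e eE)).
Qed.

Lemma deleted_node (V : {set T}) v d : v \in V -> v \notin V :\ d -> v = d.
Proof. by rewrite in_setD1 => -> /[!andbT] /negPn/eqP. Qed.

End Neighbors.

Section Persistence.
Variables (T : finType) (R : mgraph T -> mgraph T -> Prop) (k : nat).

Definition nodes_decreasing := forall G G', R G G' -> nodes G' \subset nodes G.

Definition keeps_adjacency := forall G G' v w, R G G' ->
  v \in nodes G' -> w \in nodes G' -> w \in neighbors (edges G) v -> w \in neighbors (edges G') v.

Definition deletes_degree_le := forall G G' v, R G G' ->
  v \in nodes G -> v \notin nodes G' -> #|neighbors (edges G) v| <= k.

Hypotheses (Rdec : nodes_decreasing) (Radj : keeps_adjacency) (Rdeg : deletes_degree_le).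

Lemma star_nodes_decreasing G G' : star R G G' -> nodes G' \subset nodes G.
Proof. by elim=> // G1 G2 G3 st _ sub32; apply: subset_trans sub32 (Rdec st). Qed.

Lemma star_keeps_node G G' v (W : {set T}) : star R G G' -> v \in nodes G ->
  W \subset neighbors (edges G) v -> W \subset nodes G' -> k < #|W| -> v \in nodes G'.
Proof.
move=> st; elim: st W => // G1 G2 G3 st12 st23 IH W vG1 WN W3 kW.
have W2 : W \subset nodes G2 := subset_trans W3 (star_nodes_decreasing st23).
have vG2 : v \in nodes G2.
  apply/negPn/negP => /(Rdeg st12 vG1) degk.
  by move: kW; rewrite ltnNge (leq_trans (subset_leq_card WN) degk).
apply: (IH W vG2) W3 kW; apply/subsetP => w wW.
exact: Radj st12 vG2 (subsetP W2 w wW) (subsetP WN w wW).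
Qed.

Lemma deletes_exactly_degree_le H v :
  all (fun e => (e.1 \in nodes H) && (e.2 \in nodes H)) (edges H) -> v \in nodes H ->
  deletes_exactly R H v -> #|neighbors (edges H) v| <= k.
Proof.
move=> endsH vH [H' [st nodesH']]; rewrite leqNgt; apply/negP => kN.
have NH' : neighbors (edges H) v \subset nodes H' by rewrite nodesH' neighbors_sub_nodes.
by have := star_keeps_node st vH (subxx _) NH' kN; rewrite nodesH' setD11.
Qed.

End Persistence.

Section Reduction.
Variables (T : finType) (R : mgraph T -> mgraph T -> Prop).
Implicit Types (V : {set T}) (E S : seq (T * T)).

Definition perm_stable :=
  forall G G' E, R G G' -> perm_eq E (edges G) -> R (MG (nodes G) E) G'.

Lemma deletes_exactly_step V E E' v :
  R (MG V E) (MG V E') -> deletes_exactly R (MG V E') v -> deletes_exactly R (MG V E) v.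
Proof. by move=> st [H' [st' nodesH']]; exists H'; split=> //; apply: star_step st st'. Qed.

Lemma deletes_exactly_last V E E' v :
  R (MG V E) (MG (V :\ v) E') -> deletes_exactly R (MG V E) v.
Proof.
by move=> st; exists (MG (V :\ v) E'); split=> //; apply: star_step st (star_refl _ _).
Qed.

Lemma deletes_exactly_perm V E1 E2 v : perm_stable -> perm_eq E1 E2 ->
  deletes_exactly R (MG V E2) v -> deletes_exactly R (MG V E1) v.
Proof.
move=> Rperm p [H' [st nodesH']].
move: st nodesH'; move G0: (MG V E2) => G st.
case: st G0 => [G1|G1 G2 G3 st12 st23] G1def nodesH'; subst G1.
  by exists (MG V E1); split; [apply: star_refl|].
by exists G3; split=> //; apply: star_step (Rperm _ _ _ st12 p) st23.
Qed.

Hypothesis collapse : forall V x S, R (MG V ((x, x) :: (x, x) :: S)) (MG V ((x, x) :: S)).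

Lemma deletes_exactly_loops V x n S v : deletes_exactly R (MG V ((x, x) :: S)) v ->
  deletes_exactly R (MG V (nseq n.+1 (x, x) ++ S)) v.
Proof. by elim: n => [//|n IH] /IH; apply: deletes_exactly_step; apply: collapse. Qed.

End Reduction.

Section Links.
Variable T : finType.
Implicit Types (u v w : T) (e : T * T) (E : seq (T * T)).

Definition link v e := (e != (v, v)) && incident v e.

Definition links v E := [seq e <- E | link v e].

Lemma perm_star v E : perm_eq E
  (nseq (count_mem (v, v) E) (v, v) ++ links v E ++ [seq e <- E | ~~ incident v e]).
Proof.
set inc := [seq e <- E | incident v e].
have loopsE : [seq e <- inc | e == (v, v)] = nseq (count_mem (v, v) E) (v, v).
  rewrite -filter_predI -size_filter (@eq_filter _ _ (pred1 (v, v))).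
    by apply/all_pred1P; apply: filter_all.
  by move=> e /=; case: eqP => // ->; rewrite /incident eqxx.
have linksE : links v E = [seq e <- inc | e != (v, v)] by rewrite -filter_predI.
apply: perm_trans (_ : perm_eq E (inc ++ [seq e <- E | ~~ incident v e])) _.
  by rewrite perm_sym; apply/permPl; apply: perm_filterC.
by rewrite catA perm_cat2r -loopsE linksE perm_sym; apply/permPl; apply: perm_filterC.
Qed.

Lemma has_incident_rest v E : ~~ has (incident v) [seq e <- E | ~~ incident v e].
Proof. by rewrite -all_predC filter_all. Qed.

Lemma link_neighbor v E e : e \in links v E -> exists2 u, u \in neighbors E v & joins v u e.
Proof.
rewrite mem_filter => /andP[/andP[ne ie] eE].
have [u uv j] := incident_joins ie ne; exists u => //.
by apply/neighborsP; split=> //; apply/hasP; exists e.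
Qed.

Lemma neighbor_link v E u : u \in neighbors E v -> has (joins v u) (links v E).
Proof.
case/neighborsP=> uv /hasP[e eE j]; apply/hasP; exists e => //.
rewrite mem_filter eE andbT /link (joins_incident j) andbT.
by apply: contra uv => /eqP ee; rewrite ee in j; rewrite (joins_loop j).
Qed.

Lemma has_incident_star v E :
  has (incident v) E -> 0 < count_mem (v, v) E + size (links v E).
Proof.
case/hasP=> e eE ie; rewrite addn_gt0 size_filter -!has_count.
case: (eqVneq e (v, v)) => [ee|ne]; apply/orP; [left | right]; apply/hasP; exists e => //.
- exact/eqP.
- by rewrite /link ne.
Qed.

Lemma links_joins_single v E u : #|neighbors E v| <= 1 -> u \in neighbors E v ->
  all (joins v u) (links v E).
Proof.
move=> N1 uN; apply/allP => e /link_neighbor[w wN j].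
by move: wN; rewrite (card_le1P N1 u uN) inE => /eqP <-.
Qed.

Lemma size_links_le1 v E :
  no_parallel E -> #|neighbors E v| <= 1 -> size (links v E) <= 1.
Proof.
move=> simple N1; case E_links: (links v E) => [//|e L].
have [u uN _] : exists2 u, u \in neighbors E v & joins v u e.
  by apply: link_neighbor; rewrite E_links mem_head.
have := links_joins_single N1 uN; rewrite all_count -E_links => /eqP <-.
have /neighborsP[uv _] := uN.
apply: leq_trans (simple v u _); last by rewrite eq_sym.
by rewrite count_filter; apply: sub_count => e' /andP[].
Qed.

End Links.

Section NodeBank.
Variables (T : finType) (a b : T).
Implicit Types (V : {set T}) (E L O : seq (T * T)).

Lemma step_n_nodes_decreasing : nodes_decreasing (step_n a b).
Proof. by move=> G G'; case=> *; rewrite /= ?subD1set. Qed.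

Lemma step_n_deletes_degree_le : deletes_degree_le (step_n a b) 1.
Proof.
move=> G G' v; case=> [V E E' d _ _ p free|V E E' x _|V E E' d u e _ _ _ j p free
  |V E E' d u e _ _ _ j p free] /= vV; rewrite ?vV // => /(deleted_node vV) ->.
- by rewrite (neighbors_isolate (l := [:: (d, d)]) p free) neighbors_loop cards0.
- rewrite (neighbors_isolate (l := [:: e]) p free).
  by rewrite (leq_trans (subset_leq_card (neighbors_joins j))) ?cards1.
- rewrite (neighbors_isolate (l := [:: (d, d); e]) p free) -cat1s neighbors_cat.
  rewrite neighbors_loop set0U.
  by rewrite (leq_trans (subset_leq_card (neighbors_joins j))) ?cards1.
Qed.

Lemma step_n_keeps_adjacency : keeps_adjacency (step_n a b).
Proof.
move=> G G' v w; case=> [V E E' d _ _ p _|V E E' x p|V E E' d u e _ _ _ j p _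
  |V E E' d u e _ _ _ j p _] /=.
- move=> /setD1P[vd _] /setD1P[wd _].
  apply: (neighbors_drop (l := [:: (d, d)]) [::] p _ vd wd).
  by rewrite /= /incident eqxx.
- move=> _ _; apply/subsetP: w.
  apply: (neighbors_replace (l := [:: (x, x); (x, x)]) (l' := [:: (x, x)]) p).
  by rewrite -cat1s neighbors_cat setUid.
- move=> /setD1P[vd _] /setD1P[wd _].
  apply: (neighbors_drop (l := [:: e]) [:: (u, u)] p _ vd wd).
  by rewrite /= (joins_incident j).
- move=> /setD1P[vd _] /setD1P[wd _].
  apply: (neighbors_drop (l := [:: (d, d); e]) [:: (u, u)] p _ vd wd) => /=.
  by rewrite (joins_incident j) /incident eqxx.
Qed.

Lemma step_n_perm_stable : perm_stable (step_n a b).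
Proof.
move=> G G' E; case=> *; econstructor; try eassumption; apply: perm_trans; eassumption.
Qed.

Lemma step_n_deletes_leaf V v n L O : v \in V -> v \notin [:: a; b] ->
  ~~ has (incident v) O -> all (link v) L -> size L <= 1 -> 0 < n + size L ->
  deletes_exactly (step_n a b) (MG V (nseq n (v, v) ++ L ++ O)) v.
Proof.
move=> vV vab free; case: L => [|e [|//]] /=; rewrite ?addn0 ?addn1.
  case: n => // n _ _ _; apply: deletes_exactly_loops => [V0 x S|].
    by apply: N2; rewrite perm_refl.
  exact/deletes_exactly_last/(N1 vV vab (perm_refl _) free).
rewrite andbT => /andP[ne ie] _ _; have [u uv j] := incident_joins ie ne.
case: n => [|n]; first exact/deletes_exactly_last/(N3 vV vab uv j (perm_refl _) free).
apply: deletes_exactly_loops => [V0 x S|]; first by apply: N2; rewrite perm_refl.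
exact/deletes_exactly_last/(N4 vV vab uv j (perm_refl _) free).
Qed.

Lemma deletes_exactly_n V E v : v \in V -> v \notin [:: a; b] -> no_parallel E ->
  has (incident v) E -> #|neighbors E v| <= 1 -> deletes_exactly (step_n a b) (MG V E) v.
Proof.
move=> vV vab simple incv N1.
apply: (deletes_exactly_perm step_n_perm_stable (perm_star v E)).
apply: step_n_deletes_leaf => //; last exact: has_incident_star.
- exact: has_incident_rest.
- exact: filter_all.
- exact: size_links_le1.
Qed.

End NodeBank.

Section EdgeBank.
Variables (T : finType) (a b : T).
Implicit Types (V : {set T}) (E S O Q : seq (T * T)).

Lemma step_e_nodes_decreasing : nodes_decreasing (step_e a b).
Proof. by move=> G G'; case=> *; rewrite /= ?subD1set. Qed.

Lemma step_e_deletes_degree_le : deletes_degree_le (step_e a b) 2.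
Proof.
move=> G G' v; case=> [V E E' d _ _ p free|V E E' x _|V E E' d u _ _ _ p free
  |V E E' x u _ _ _|V E E' x y _ _|V E E' x y _ _|V E E' x d y _ _ _ _ _ p free] /= vV;
  rewrite ?vV // => /(deleted_node vV) ->.
- by rewrite (neighbors_isolate (l := [:: (d, d)]) p free) neighbors_loop cards0.
- rewrite (neighbors_isolate (l := [:: (d, u)]) p free).
  by rewrite (leq_trans (subset_leq_card (neighbors_joins (joins_pair d u)))) ?cards1.
- rewrite (neighbors_isolate (l := [:: (x, d); (d, y)]) p free) -cat1s neighbors_cat.
  have jx : joins d x (x, d) by rewrite joins_sym joins_pair.
  apply: leq_trans (subset_leq_card (setUSS (neighbors_joins jx)
    (neighbors_joins (joins_pair d y)))) _.
  by rewrite cards2; case: (x != y).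
Qed.

Lemma step_e_keeps_adjacency : keeps_adjacency (step_e a b).
Proof.
move=> G G' v w; case=> [V E E' d _ _ p _|V E E' x p|V E E' d u _ _ _ p _|V E E' x u _ _ p
  |V E E' x y _ p|V E E' x y _ p|V E E' x d y _ _ _ _ _ p _] /=.
- move=> /setD1P[vd _] /setD1P[wd _].
  apply: (neighbors_drop (l := [:: (d, d)]) [::] p _ vd wd).
  by rewrite /= /incident eqxx.
- move=> _ _; apply/subsetP: w.
  apply: (neighbors_replace (l := [:: (x, x); (x, x)]) (l' := [:: (x, x)]) p).
  by rewrite -cat1s neighbors_cat setUid.
- move=> /setD1P[vd _] /setD1P[wd _].
  apply: (neighbors_drop (l := [:: (d, u)]) [:: (u, u)] p _ vd wd).
  by rewrite /= /incident eqxx.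
- move=> _ _; apply/subsetP: w.
  apply: (neighbors_replace (l := [:: (x, x)]) (l' := [:: (x, u)]) p).
  by rewrite neighbors_loop sub0set.
- move=> _ _; apply/subsetP: w.
  apply: (neighbors_replace (l := [:: (x, y); (x, y)]) (l' := [:: (x, y)]) p).
  by rewrite -cat1s neighbors_cat setUid.
- move=> _ _; apply/subsetP: w.
  apply: (neighbors_replace (l := [:: (x, y)]) (l' := [:: (y, x)]) p).
  by rewrite neighbors_swap.
- move=> /setD1P[vd _] /setD1P[wd _].
  apply: (neighbors_drop (l := [:: (x, d); (d, y)]) [:: (x, y)] p _ vd wd) => /=.
  by rewrite /incident !eqxx !orbT.
Qed.

Lemma step_e_perm_stable : perm_stable (step_e a b).
Proof.
move=> G G' E; case=> *; econstructor; try eassumption; apply: perm_trans; eassumption.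
Qed.

Lemma step_e_orient V v x y e S : x != y -> joins x y e ->
  deletes_exactly (step_e a b) (MG V ((x, y) :: S)) v ->
  deletes_exactly (step_e a b) (MG V (e :: S)) v.
Proof.
move=> xy /orP[]/eqP-> // del; apply: deletes_exactly_step del.
by apply: (E6 a b V _ (perm_refl _)); rewrite eq_sym.
Qed.

Lemma step_e_merge V v x y Q S : x != y -> Q != [::] -> all (joins x y) Q ->
  deletes_exactly (step_e a b) (MG V ((x, y) :: S)) v ->
  deletes_exactly (step_e a b) (MG V (Q ++ S)) v.
Proof.
move=> xy; case: Q => // e Q _; elim: Q e => [|e' Q IH] e /=.
  by rewrite andbT => j; apply: step_e_orient.
case/and3P=> je je' jQ del; apply: (step_e_orient xy je).
apply: (deletes_exactly_perm step_e_perm_stable (_ : perm_eq _ (e' :: (x, y) :: Q ++ S))).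
  by apply/permPl; apply: (perm_catCA [:: (x, y)] [:: e']).
apply: (step_e_orient xy je'); apply: deletes_exactly_step (E5 a b V xy (perm_refl _)) _.
by apply: (IH (x, y)) => //=; rewrite joins_pair jQ.
Qed.

Lemma step_e_loops_to_edge V v x u n S : u \in V -> u != x ->
  deletes_exactly (step_e a b) (MG V (nseq n (x, u) ++ S)) v ->
  deletes_exactly (step_e a b) (MG V (nseq n (x, x) ++ S)) v.
Proof.
move=> uV ux; elim: n S => [//|n IH] S del.
have swap y z : perm_eq (y :: nseq n z ++ S) (nseq n z ++ y :: S).
  by apply/permPl; apply: (perm_catCA [:: y] (nseq n z)).
apply: deletes_exactly_step (_ : step_e a b _ (MG V ((x, u) :: nseq n (x, x) ++ S))) _.
  by apply: E4; rewrite ?perm_refl.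
apply: (deletes_exactly_perm step_e_perm_stable (swap (x, u) (x, x))); apply: IH.
by apply: deletes_exactly_perm step_e_perm_stable _ del; rewrite perm_sym swap.
Qed.

Lemma step_e_deletes_single V v u Q O : v \in V -> v \notin [:: a; b] -> u != v ->
  ~~ has (incident v) O -> Q != [::] -> all (joins v u) Q ->
  deletes_exactly (step_e a b) (MG V (Q ++ O)) v.
Proof.
move=> vV vab uv free Q0 jQ; apply: step_e_merge Q0 jQ _; first by rewrite eq_sym.
exact: deletes_exactly_last (E3 vV vab uv (perm_refl _) free).
Qed.

Lemma step_e_deletes_pair V v u1 u2 Q O : v \in V -> v \notin [:: a; b] ->
  u1 != u2 -> u1 != v -> u2 != v -> ~~ has (incident v) O ->
  has (joins v u1) Q -> has (joins v u2) Q -> all (fun e => joins v u1 e || joins v u2 e) Q ->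
  deletes_exactly (step_e a b) (MG V (Q ++ O)) v.
Proof.
move=> vV vab u12 u1v u2v free jQ1 jQ2 jQ.
set Q1 := [seq e <- Q | joins v u1 e]; set Q2 := [seq e <- Q | ~~ joins v u1 e].
apply: (deletes_exactly_perm step_e_perm_stable (_ : perm_eq _ (Q1 ++ Q2 ++ O))).
  by rewrite catA perm_cat2r perm_sym; apply/permPl; apply: perm_filterC.
apply: (step_e_merge u1v); first by rewrite -has_filter.
  by apply/allP => e; rewrite mem_filter joins_sym => /andP[].
apply: (deletes_exactly_perm step_e_perm_stable (_ : perm_eq _ (Q2 ++ (u1, v) :: O))).
  by apply/permPl; apply: (perm_catCA [:: (u1, v)] Q2 O).
apply: (step_e_merge (x := v) (y := u2)).
- by rewrite eq_sym.
- rewrite -has_filter; case/hasP: jQ2 => e eQ j2; apply/hasP; exists e => //=.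
  by apply/negP => j1; rewrite (joins_inj u1v j1 j2) eqxx in u12.
- apply/allP => e; rewrite mem_filter => /andP[nj1 eQ].
  by case/orP: (allP jQ e eQ) => // j1; rewrite j1 in nj1.
apply: deletes_exactly_last (E7 vV vab u12 u1v u2v _ free).
by apply/permPl; apply: (perm_catCA [:: (v, u2)] [:: (u1, v)] O).
Qed.

Lemma deletes_exactly_e V E v : v \in V -> v \notin [:: a; b] ->
  all (fun e => (e.1 \in V) && (e.2 \in V)) E ->
  has (incident v) E -> #|neighbors E v| <= 2 -> deletes_exactly (step_e a b) (MG V E) v.
Proof.
move=> vV vab endsV incv N2.
apply: (deletes_exactly_perm step_e_perm_stable (perm_star v E)).
set L := links v E; set O := [seq e <- E | ~~ incident v e].
have nL : 0 < count_mem (v, v) E + size L := has_incident_star incv.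
move: (count_mem _ E) nL => n nL.
have free : ~~ has (incident v) O := has_incident_rest v E.
have nodesN u : u \in neighbors E v -> u \in V /\ u != v.
  by move=> /(subsetP (neighbors_sub_nodes v endsV)); rewrite in_setD1 => /andP[].
have Q0 u : nseq n (v, u) ++ L != [::] by rewrite -size_eq0 size_cat size_nseq -lt0n.
move: N2; case cN: #|neighbors E v| => [|[|[|]]] // _.
- have L0 : L = [::].
    case eL: L => [//|e L']; have [u uN _] : exists2 u, u \in neighbors E v & joins v u e.
      by apply: link_neighbor; rewrite -/L eL mem_head.
    by rewrite (cards0_eq cN) inE in uN.
  move: nL {Q0}; rewrite L0 addn0 /=; case: n => // n _.
  apply: deletes_exactly_loops => [V0 x S|]; first by apply: E2; rewrite perm_refl.
  exact: deletes_exactly_last (E1 vV vab (perm_refl _) free).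
- have /cards1P[u Nu] : #|neighbors E v| == 1 by rewrite cN.
  have uN : u \in neighbors E v by rewrite Nu set11.
  have [uV uv] := nodesN u uN.
  apply: (step_e_loops_to_edge uV uv); rewrite catA.
  apply: step_e_deletes_single vV vab uv free (Q0 u) _.
  by rewrite all_cat all_nseq joins_pair orbT links_joins_single ?cN.
- have /cards2P[u1 [u2 [u12 Nu]]] : #|neighbors E v| == 2 by rewrite cN.
  have u1N : u1 \in neighbors E v by rewrite Nu !inE eqxx.
  have u2N : u2 \in neighbors E v by rewrite Nu !inE eqxx orbT.
  have [[u1V u1v] [_ u2v]] := (nodesN u1 u1N, nodesN u2 u2N).
  apply: (step_e_loops_to_edge u1V u1v); rewrite catA.
  apply: step_e_deletes_pair vV vab u12 u1v u2v free _ _ _.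
  + by rewrite has_cat neighbor_link ?orbT.
  + by rewrite has_cat neighbor_link ?orbT.
  + rewrite all_cat all_nseq joins_pair orbT /=; apply/allP => e /link_neighbor[w].
    by rewrite Nu !inE => /orP[]/eqP-> ->; rewrite ?orbT.
Qed.

End EdgeBank.

Theorem lemma1 :
  (forall (T : finType) (a b : T) (H : mgraph T) (v : T),
      wf_graph a b H -> no_parallel (edges H) ->
      v \in nodes H -> v \notin [:: a; b] -> has (incident v) (edges H) ->
      deletes_exactly (step_n a b) H v <-> #|neighbors (edges H) v| <= 1)
  /\
  (forall (T : finType) (a b : T) (H : mgraph T) (v : T),
      wf_graph a b H ->
      v \in nodes H -> v \notin [:: a; b] -> has (incident v) (edges H) ->
      deletes_exactly (step_e a b) H v <-> #|neighbors (edges H) v| <= 2).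
Proof.
split=> T a b [V E] v [_ _ endsV] /=.
- move=> simple vV vab incv; split; last exact: deletes_exactly_n.
  exact: (deletes_exactly_degree_le (@step_n_nodes_decreasing _ a b)
    (@step_n_keeps_adjacency _ a b) (@step_n_deletes_degree_le _ a b) endsV vV).
- move=> vV vab incv; split; last exact: deletes_exactly_e.
  exact: (deletes_exactly_degree_le (@step_e_nodes_decreasing _ a b)
    (@step_e_keeps_adjacency _ a b) (@step_e_deletes_degree_le _ a b) endsV vV).
Qed.
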